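(* With $\Omega_n=\{1,\dots,n\}$, $\mathcal P_n=\mathcal P(\Omega_n)$, and $\{\gamma_n\}_{n\ge2}$ where $\gamma_n$ maps each $p\in\mathcal P_n$ continuously to a bilinear form $\gamma_{n,p}$ on $\mathbb R^{\Omega_n}$, the following are equivalent: (i') there exist $c_1,c_2\in\mathbb R$ such that for all $n$, $p\in\mathcal P_n$, $A,B\in\mathbb R^{\Omega_n}$: $\gamma_{n,p}(A,B)=c_1\langle A,B\rangle_p+c_2\langle A\rangle_p\langle B\rangle_p$; (ii-2) for all $m\le n$ and every surjection $F:\Omega_n\to\Omega_m$: $\gamma_{m,p^F}(A,B)=\gamma_{n,p}(A\circ F,B\circ F)$ for all $p\in\mathcal P_n$ and $A,B\in\mathbb R^{\Omega_m}$.
   Context: $\mathcal P(\Omega)$ is the set of strictly positive probability distributions on a finite set $\Omega$. $\langle A\rangle_p=\sum_\omega p(\omega)A(\omega)$ and $\langle A,B\rangle_p=\langle AB\rangle_p$. For a surjection $F:\Omega_n\to\Omega_m$ and $p\in\mathcal P_n$, $p^F(x)=\sum_{y\in F^{-1}(x)}p(y)$. *)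

From HB Require Import structures.
From mathcomp Require Import all_boot all_order all_algebra.
From mathcomp Require Import all_classical all_reals all_analysis.
Set Implicit Arguments. Unset Strict Implicit. Unset Printing Implicit Defensive.
Import Order.TTheory GRing.Theory Num.Theory.
Import numFieldNormedType.Exports.
Local Open Scope ring_scope.
Local Open Scope classical_set_scope.

(* Omega_n = 'I_n; real functions on Omega_n are row vectors 'rV[R]_n
   (so that they carry mathcomp-analysis' normed topology). *)

Definition posprob (R : realType) (n : nat) (p : 'rV[R]_n) : Prop :=
  (forall i, 0 < p ord0 i) /\ \sum_(i < n) p ord0 i = 1.

Definition expect (R : realType) (n : nat) (p A : 'rV[R]_n) : R :=
  \sum_(i < n) p ord0 i * A ord0 i.

Definition pinner (R : realType) (n : nat) (p A B : 'rV[R]_n) : R :=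
  \sum_(i < n) p ord0 i * (A ord0 i * B ord0 i).

Definition bilinear_form (R : realType) (n : nat)
    (g : 'rV[R]_n -> 'rV[R]_n -> R) : Prop :=
  (forall (a : R) (A A' B : 'rV[R]_n), g (a *: A + A') B = a * g A B + g A' B) /\
  (forall (a : R) (A B B' : 'rV[R]_n), g A (a *: B + B') = a * g A B + g A B').

Definition gram (R : realType) (n : nat) (g : 'rV[R]_n -> 'rV[R]_n -> R)
  : 'M[R]_n := \matrix_(i, j) g (delta_mx ord0 i) (delta_mx ord0 j).

Definition pushf (R : realType) (n m : nat) (F : 'I_n -> 'I_m) (p : 'rV[R]_n)
  : 'rV[R]_m := \row_(x < m) \sum_(y < n | F y == x) p ord0 y.

Definition compF (R : realType) (n m : nat) (A : 'rV[R]_m) (F : 'I_n -> 'I_m)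
  : 'rV[R]_n := \row_(y < n) A ord0 (F y).

From HB Require Import structures.
From mathcomp Require Import all_boot all_order all_algebra.
From mathcomp Require Import all_classical all_reals all_analysis.
From mathcomp Require Import perm ring lra.
Import Order.TTheory GRing.Theory Num.Theory.
Import numFieldNormedType.Exports.
Local Open Scope ring_scope.
Local Open Scope classical_set_scope.
Set Implicit Arguments. Unset Strict Implicit. Unset Printing Implicit Defensive.

(* Invariance under permutations of
   the points makes the Gram matrix of gamma_N at the uniform distribution u_N equal to
   a_N on the diagonal and b_N off it, i.e. gamma_N(u_N) is the standard form with
   c1 = N (a_N - b_N) and c2 = N^2 b_N.  Collapsing consecutive blocks of sizes
   k_1, ..., k_m of Omega_N (N = sum k) pushes u_N forward to the rational distribution
   (k_x / N)_x, so gamma_m is the standard form with the coefficients of u_N at every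
   rational point; collapsing blocks of a common size M shows that u_N and u_(NM) have
   the same coefficients, so all of them agree with those of u_2.  Rational points are
   dense in P_m and the Gram matrix is continuous on P_m, which gives the standard form
   everywhere.  The converse holds because <A,B>_p and <A>_p are invariant under
   pushforward. *)

Section BilinearForm.
Variables (R : realType) (n : nat) (g : 'rV[R]_n -> 'rV[R]_n -> R).
Hypothesis g_bilinear : bilinear_form g.

Lemma bilinear_form_suml (I : Type) (r : seq I) (a : I -> R) (F : I -> 'rV[R]_n) B :
  g (\sum_(i <- r) a i *: F i) B = \sum_(i <- r) a i * g (F i) B.
Proof.
elim: r => [|x r IH]; last by rewrite !big_cons g_bilinear.1 IH.
by have := g_bilinear.1 1 0 0 B; rewrite !big_nil scale1r addr0 mul1r; lra.
Qed.

Lemma bilinear_form_sumr (I : Type) (r : seq I) (a : I -> R) (F : I -> 'rV[R]_n) A :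
  g A (\sum_(i <- r) a i *: F i) = \sum_(i <- r) a i * g A (F i).
Proof.
elim: r => [|x r IH]; last by rewrite !big_cons g_bilinear.2 IH.
by have := g_bilinear.2 1 A 0 0; rewrite !big_nil scale1r addr0 mul1r; lra.
Qed.

Lemma bilinear_form_expand A B :
  g A B = \sum_i \sum_j A ord0 i * B ord0 j * g (delta_mx ord0 i) (delta_mx ord0 j).
Proof.
rewrite [in LHS](row_sum_delta A) bilinear_form_suml; apply: eq_bigr => i _.
rewrite [in LHS](row_sum_delta B) bilinear_form_sumr mulr_sumr.
by apply: eq_bigr => j _; rewrite mulrA [A _ _ * _]mulrC.
Qed.

End BilinearForm.

Lemma bilinear_form_eq_delta (R : realType) n (g h : 'rV[R]_n -> 'rV[R]_n -> R) :
  bilinear_form g -> bilinear_form h ->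
  (forall i j, g (delta_mx ord0 i) (delta_mx ord0 j) = h (delta_mx ord0 i) (delta_mx ord0 j)) ->
  forall A B, g A B = h A B.
Proof.
move=> gbil hbil gh A B; rewrite (bilinear_form_expand gbil) (bilinear_form_expand hbil).
by apply: eq_bigr => i _; apply: eq_bigr => j _; rewrite gh.
Qed.

Definition std_form (R : realType) n (c1 c2 : R) (p A B : 'rV[R]_n) : R :=
  c1 * pinner p A B + c2 * (expect p A * expect p B).

Section StandardForm.
Variables (R : realType) (n : nat) (p : 'rV[R]_n).

Lemma pinner_delta i j :
  pinner p (delta_mx ord0 i) (delta_mx ord0 j) = (i == j)%:R * p ord0 i.
Proof.
rewrite /pinner (bigD1 i) //= big1 => [|k /negbTE ki]; last by rewrite !mxE ki mul0r mulr0.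
by rewrite !mxE !eqxx addr0 mul1r mulrC eq_sym.
Qed.

Lemma expect_delta i : expect p (delta_mx ord0 i) = p ord0 i.
Proof.
rewrite /expect (bigD1 i) //= big1 => [|k /negbTE ki]; last by rewrite !mxE ki mulr0.
by rewrite !mxE !eqxx addr0 mulr1.
Qed.

Lemma std_form_delta c1 c2 i j :
  std_form c1 c2 p (delta_mx ord0 i) (delta_mx ord0 j) =
  c1 * (i == j)%:R * p ord0 i + c2 * (p ord0 i * p ord0 j).
Proof. by rewrite /std_form pinner_delta !expect_delta mulrA. Qed.

Lemma std_form_bilinear c1 c2 : bilinear_form (std_form c1 c2 p).
Proof.
have pinnerDl a A A' B : pinner p (a *: A + A') B = a * pinner p A B + pinner p A' B.
  rewrite /pinner mulr_sumr -big_split /=; apply: eq_bigr => i _; rewrite !mxE; ring.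
have expectD a A A' : expect p (a *: A + A') = a * expect p A + expect p A'.
  rewrite /expect mulr_sumr -big_split /=; apply: eq_bigr => i _; rewrite !mxE; ring.
have pinnerC A B : pinner p A B = pinner p B A.
  by apply: eq_bigr => i _; rewrite [A _ _ * _]mulrC.
rewrite /std_form; split=> a A A' B; rewrite ?pinnerDl ?expectD; first ring.
by rewrite ![pinner p A _]pinnerC pinnerDl; ring.
Qed.

Lemma std_form_coef_unique c1 c2 d1 d2 : (2 <= n)%N -> posprob p ->
  (forall A B, std_form c1 c2 p A B = std_form d1 d2 p A B) -> c1 = d1 /\ c2 = d2.
Proof.
move=> n2 [p_gt0 _] cd.
pose o0 : 'I_n := Ordinal (ltnW n2); pose o1 : 'I_n := Ordinal n2.
have := cd (delta_mx ord0 o0) (delta_mx ord0 o1).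
rewrite !std_form_delta (_ : o0 == o1 = false) // !mulr0 !mul0r !add0r.
move/(mulIf (mulf_neq0 (lt0r_neq0 (p_gt0 o0)) (lt0r_neq0 (p_gt0 o1)))) => c2d2.
have := cd (delta_mx ord0 o0) (delta_mx ord0 o0).
rewrite !std_form_delta eqxx c2d2 !mulr1 => /addIr /(mulIf (lt0r_neq0 (p_gt0 o0))).
by split.
Qed.

End StandardForm.

Section Pushforward.
Variables (R : realType) (n m : nat) (F : 'I_n -> 'I_m) (p : 'rV[R]_n).

Lemma sum_pushf (h : 'I_m -> R) :
  \sum_x pushf F p ord0 x * h x = \sum_y p ord0 y * h (F y).
Proof.
rewrite (partition_big F xpredT) //=; apply: eq_bigr => x _.
by rewrite mxE mulr_suml; apply: eq_bigr => y /eqP <-.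
Qed.

Lemma pinner_pushf A B : pinner (pushf F p) A B = pinner p (compF A F) (compF B F).
Proof. by rewrite /pinner sum_pushf; apply: eq_bigr => y _; rewrite !mxE. Qed.

Lemma expect_pushf A : expect (pushf F p) A = expect p (compF A F).
Proof. by rewrite /expect sum_pushf; apply: eq_bigr => y _; rewrite !mxE. Qed.

Lemma std_form_pushf c1 c2 A B :
  std_form c1 c2 (pushf F p) A B = std_form c1 c2 p (compF A F) (compF B F).
Proof. by rewrite /std_form pinner_pushf !expect_pushf. Qed.

Lemma posprob_pushf : (forall x, exists y, F y = x) -> posprob p -> posprob (pushf F p).
Proof.
move=> F_surj [p_gt0 p_sum1]; split=> [x|].
  have [y <-] := F_surj x; rewrite mxE (bigD1 y) //= ltr_pwDl //.
  by apply: sumr_ge0 => z _; exact: ltW.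
have := sum_pushf (fun _ => 1).
rewrite (eq_bigr _ (fun y _ => mulr1 (p ord0 y))) p_sum1 => <-.
by apply: eq_bigr => x _; rewrite mulr1.
Qed.

End Pushforward.

Definition uniform (R : realType) (N : nat) : 'rV[R]_N := \row_(i < N) N%:R^-1.

Lemma posprob_uniform (R : realType) N : (0 < N)%N -> posprob (uniform R N).
Proof.
move=> N_gt0; split=> [i|]; first by rewrite mxE invr_gt0 ltr0n.
under eq_bigr do rewrite mxE.
by rewrite sumr_const card_ord -[_ *+ N]mulr_natr mulVf // pnatr_eq0 -lt0n.
Qed.

Lemma pushf_perm_uniform (R : realType) N (s : {perm 'I_N}) :
  pushf s (uniform R N) = uniform R N.
Proof.
apply/rowP => x; rewrite mxE (eq_bigl (pred1 (s^-1 x)%g)) ?big_pred1_eq ?mxE // => y.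
by rewrite /= -(inj_eq (@perm_inj _ s)) permKV.
Qed.

Lemma compF_delta_perm (R : realType) N (s : {perm 'I_N}) y :
  compF (delta_mx ord0 (s y)) s = delta_mx ord0 y :> 'rV[R]_N.
Proof. by apply/rowP => z; rewrite !mxE (inj_eq (@perm_inj _ s)). Qed.

Lemma exists_perm_pair (T : finType) (y z y' z' : T) : (y == z) = (y' == z') ->
  exists s : {perm T}, s y = y' /\ s z = z'.
Proof.
move=> yz; pose w := tperm y y' z; exists (tperm y y' * tperm w z')%g.
rewrite !permM -/w !tpermL; split=> //.
have [eq_yz|neq_yz] := eqVneq y z.
  by move: yz; rewrite eq_yz eqxx => /esym/eqP <-; rewrite /w -eq_yz !tpermL.
apply: tpermD; last by rewrite eq_sym -yz.
by rewrite /w -[y' in _ == y'](tpermL y y') (inj_eq (@perm_inj _ _)) eq_sym.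
Qed.

(* [block] maps the x-th run of [k x] consecutive points of ['I_(\sum_x k x)] to [x]. *)
Section Blocks.
Variables (m : nat) (k : 'I_m -> nat).
Local Notation N := (\sum_x k x)%N.
Local Notation block := (@tagnat.sig1 m k).

Lemma sum_block (V : nmodType) (h : 'I_m -> V) :
  \sum_(y < N) h (block y) = \sum_x h x *+ k x.
Proof.
under [RHS]eq_bigr do rewrite -[k _]card_ord -sumr_const.
rewrite sig_big_dep /= (reindex _ (@tagnat.sig_bij_on _ k)) /=.
by apply: eq_bigr.
Qed.

Lemma block_surjective : (forall x, 0 < k x)%N -> forall x, exists y, block y = x.
Proof.
by move=> k_gt0 x; exists (@tagnat.Rank m k x (Ordinal (k_gt0 x))); rewrite tagnat.Rank1K.
Qed.

Lemma leq_sum_block : (forall x, 0 < k x)%N -> (m <= N)%N.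
Proof.
move=> k_gt0; have : (\sum_(x < m) 1 <= N)%N by apply: leq_sum => x _; exact: k_gt0.
by rewrite sum_nat_const card_ord muln1.
Qed.

Lemma pushf_block_uniform (R : realType) :
  pushf block (uniform R N) = \row_x ((k x)%:R / N%:R).
Proof.
apply/rowP => x; rewrite !mxE big_mkcond /=.
transitivity (\sum_(y < N) (((block y == x)%:R : R) / N%:R)).
  by apply: eq_bigr => y _; rewrite mxE; case: eqP; rewrite ?mul1r ?mul0r.
rewrite (sum_block (fun x0 => (x0 == x)%:R / N%:R)) (bigD1 x) //= eqxx mul1r.
rewrite mulr_natl [X in _ + X]big1 ?addr0 // => x' /negbTE ->.
by rewrite mul0r mul0rn.
Qed.

End Blocks.

Lemma approx_error_le (R : realFieldType) (P K N N0 m : R) :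
  0 < N0 -> N0 <= N -> N <= N0 + m -> 0 <= P <= 1 -> N0 * P < K <= N0 * P + 1 -> 1 <= m ->
  `|P - K / N| <= m / N0.
Proof.
move=> N0_gt0 N_lo N_hi /andP[P_ge0 P_le1] /andP[K_lo K_hi] m_ge1.
have N_gt0 : 0 < N by lra.
have err : `|N * P - K| <= m by rewrite ler_norml; apply/andP; split; nra.
have -> : P - K / N = (N * P - K) / N by field; rewrite gt_eqF.
rewrite normrM normfV (gtr0_norm N_gt0) ler_pdivrMr //.
set r := m / N0; have rN0 : r * N0 = m by rewrite /r mulfVK ?gt_eqF.
have r_ge0 : 0 <= r by rewrite divr_ge0 ?ltW //; lra.
nra.
Qed.

Lemma rational_approx (R : realType) m (p : 'rV[R]_m) e : posprob p -> 0 < e ->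
  exists k : 'I_m -> nat, (forall x, 0 < k x)%N /\
    forall i, `|p ord0 i - (k i)%:R / (\sum_x k x)%:R| < e.
Proof.
move=> [p_gt0 p_sum1] e_gt0.
pose N0 := (Num.truncn (m%:R / e)).+1.
pose k x := (Num.truncn (N0%:R * p ord0 x)).+1.
exists k; split=> // i.
have k_bounds x : N0%:R * p ord0 x < (k x)%:R <= N0%:R * p ord0 x + 1.
  have /andP[lo hi] := truncn_itv (mulr_ge0 (ler0n R N0) (ltW (p_gt0 x))).
  by rewrite hi -natr1 lerD2r lo.
have sum_lo : \sum_x N0%:R * p ord0 x = N0%:R :> R by rewrite -mulr_sumr p_sum1 mulr1.
have sum_hi : \sum_x (N0%:R * p ord0 x + 1) = N0%:R + m%:R :> R.
  by rewrite big_split /= sum_lo sumr_const card_ord.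
have N_lo : N0%:R <= (\sum_x k x)%:R :> R.
  by rewrite -sum_lo natr_sum; apply: ler_sum => x _; case/andP: (k_bounds x) => /ltW.
have N_hi : (\sum_x k x)%:R <= N0%:R + m%:R :> R.
  by rewrite -sum_hi natr_sum; apply: ler_sum => x _; case/andP: (k_bounds x).
have p_le1 : p ord0 i <= 1.
  by rewrite -p_sum1 (bigD1 i) //= lerDl sumr_ge0 // => x _; exact: ltW.
have m_ge1 : 1 <= m%:R :> R by rewrite ler1n (leq_ltn_trans (leq0n i) (ltn_ord i)).
apply: le_lt_trans (approx_error_le _ N_lo N_hi _ (k_bounds i) m_ge1) _ => //.
  by rewrite p_le1 ltW.
have := truncn_itv (divr_ge0 (ler0n R m) (ltW e_gt0)).
by rewrite -/N0 => /andP[_]; rewrite ltr_pdivrMr // ltr_pdivrMr ?ltr0n // mulrC.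
Qed.

Lemma continuous_within_dense_eq0 (R : realType) (T : pseudoMetricType R) (S : set T)
    (h : T -> R) :
  {within S, continuous h} ->
  (forall p e, S p -> 0 < e -> exists q, [/\ S q, ball p e q & h q = 0]) ->
  forall p, S p -> h p = 0.
Proof.
move=> /subspace_continuousP h_cont h_dense p Sp; apply/eqP/negPn/negP => hp_neq0.
have /cvgrPdist_lt /(_ `|h p|) := h_cont p Sp.
rewrite normr_gt0 => /(_ hp_neq0) /nbhs_ballP [d d_gt0 near_p].
have [q [Sq pq hq0]] := h_dense p d Sp d_gt0.
by have := near_p q pq Sq; rewrite /from_subspace hq0 subr0 ltxx.
Qed.

Lemma row_ball (R : realType) m (p q : 'rV[R]_m) e :
  0 < e -> (forall i, `|p ord0 i - q ord0 i| < e) -> ball p e q.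
Proof. by move=> e_gt0 pq; split=> // i j; rewrite ord1; exact: pq. Qed.

Lemma continuous_std_form_delta (R : realType) n (c1 c2 : R) (i j : 'I_n) :
  continuous (fun p : 'rV[R]_n => std_form c1 c2 p (delta_mx ord0 i) (delta_mx ord0 j)).
Proof.
have coord (k : 'I_n) : continuous (fun p : 'rV[R]_n => p ord0 k).
  exact: @coord_continuous R 1 n ord0 k.
have -> : (fun p : 'rV[R]_n => std_form c1 c2 p (delta_mx ord0 i) (delta_mx ord0 j)) =
    (fun=> c1 * (i == j)%:R) \* (fun p : 'rV[R]_n => p ord0 i) +
    (fun=> c2) \* ((fun p : 'rV[R]_n => p ord0 i) \* (fun p : 'rV[R]_n => p ord0 j)).
  by apply/funext => p; rewrite std_form_delta.
move=> p; apply: continuousD; apply: continuousM; try exact: cst_continuous; try exact: coord.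
exact: (continuousM (coord i p) (coord j p)).
Qed.

Section PushforwardInvariance.
Variables (R : realType) (gamma : forall n : nat, 'rV[R]_n -> 'rV[R]_n -> 'rV[R]_n -> R).
Arguments gamma : clear implicits.
Hypothesis gamma_bilinear : forall n : nat, (2 <= n)%N -> forall p : 'rV[R]_n, posprob p ->
  bilinear_form (gamma n p).
Hypothesis gamma_pushf : forall m n : nat, (2 <= m)%N -> (m <= n)%N ->
  forall F : 'I_n -> 'I_m, (forall x : 'I_m, exists y : 'I_n, F y = x) ->
  forall p : 'rV[R]_n, posprob p -> forall A B : 'rV[R]_m,
  gamma m (pushf F p) A B = gamma n p (compF A F) (compF B F).
Hypothesis gamma_continuous : forall n : nat, (2 <= n)%N ->
  {within [set p : 'rV[R]_n | posprob p], continuous (fun p => gram (gamma n p))}.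

Lemma gamma_uniform_perm N (s : {perm 'I_N}) y z : (2 <= N)%N ->
  gamma N (uniform R N) (delta_mx ord0 (s y)) (delta_mx ord0 (s z)) =
  gamma N (uniform R N) (delta_mx ord0 y) (delta_mx ord0 z).
Proof.
move=> N2; have s_surj x : exists y, s y = x by exists (s^-1 x)%g; rewrite permKV.
rewrite -[in LHS](pushf_perm_uniform R s).
by rewrite (gamma_pushf N2 (leqnn N) s_surj (posprob_uniform R (ltnW N2))) !compF_delta_perm.
Qed.

Lemma gamma_uniform_std N : (2 <= N)%N ->
  exists c1 c2, gamma N (uniform R N) =2 std_form c1 c2 (uniform R N).
Proof.
move=> N2; pose o0 : 'I_N := Ordinal (ltnW N2); pose o1 : 'I_N := Ordinal N2.
pose g y z := gamma N (uniform R N) (delta_mx ord0 y) (delta_mx ord0 z).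
have g_eq y z : g y z = g o0 (if y == z then o0 else o1).
  set o' := if y == z then o0 else o1.
  have : (o0 == o') = (y == z) by rewrite /o'; case: (y == z); rewrite ?eqxx.
  clearbody o'; case/exists_perm_pair => s [<- <-].
  by rewrite /g gamma_uniform_perm.
exists (N%:R * (g o0 o0 - g o0 o1)), (N%:R ^+ 2 * g o0 o1).
have uP := posprob_uniform R (ltnW N2).
apply: bilinear_form_eq_delta => [||y z]; [exact: gamma_bilinear | exact: std_form_bilinear |].
have N_neq0 : N%:R != 0 :> R by rewrite pnatr_eq0 -lt0n ltnW.
by rewrite std_form_delta !mxE -/(g y z) g_eq; case: (y == z) => /=; field.
Qed.

Lemma gamma_pushf_std m n (F : 'I_n -> 'I_m) (p : 'rV[R]_n) c1 c2 :
  (2 <= m)%N -> (m <= n)%N -> (forall x, exists y, F y = x) -> posprob p ->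
  gamma n p =2 std_form c1 c2 p -> gamma m (pushf F p) =2 std_form c1 c2 (pushf F p).
Proof. by move=> m2 mn F_surj pP gp A B; rewrite gamma_pushf // gp std_form_pushf. Qed.

Lemma gamma_block_std m (k : 'I_m -> nat) c1 c2 :
  (2 <= m)%N -> (forall x, 0 < k x)%N ->
  gamma _ (uniform R (\sum_x k x)) =2 std_form c1 c2 (uniform R _) ->
  let q := \row_x ((k x)%:R / (\sum_x k x)%:R) in gamma m q =2 std_form c1 c2 q.
Proof.
move=> m2 k_gt0; rewrite /= -pushf_block_uniform; have mN := leq_sum_block k_gt0.
apply: gamma_pushf_std => //; first exact: block_surjective.
exact/posprob_uniform/(leq_trans _ mN)/ltnW.
Qed.

Lemma gamma_uniform_std_mul N M c1 c2 d1 d2 : (2 <= N)%N -> (0 < M)%N ->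
  gamma N (uniform R N) =2 std_form c1 c2 (uniform R N) ->
  gamma (N * M) (uniform R (N * M)) =2 std_form d1 d2 (uniform R (N * M)) ->
  c1 = d1 /\ c2 = d2.
Proof.
move=> N2 M_gt0 gc.
have NM : (\sum_(x < N) M)%N = (N * M)%N by rewrite sum_nat_const card_ord.
rewrite -NM => /(gamma_block_std N2 (fun _ => M_gt0)) /=.
have -> : \row_(x < N) (M%:R / (\sum_(x < N) M)%:R) = uniform R N.
  apply/rowP => x; rewrite !mxE NM natrM invfM mulrA mulrC mulrA mulVf ?mul1r //.
  by rewrite pnatr_eq0 -lt0n.
move=> gd; apply: (std_form_coef_unique N2 (posprob_uniform R (ltnW N2))) => A B.
by rewrite -gc gd.
Qed.

Lemma gamma_uniform_std_const :
  exists c1 c2, forall N, (2 <= N)%N -> gamma N (uniform R N) =2 std_form c1 c2 (uniform R N).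
Proof.
have [c1 [c2 gc]] := gamma_uniform_std (leqnn 2).
exists c1, c2 => N N2.
have [d1 [d2 gd]] := gamma_uniform_std N2.
have [e1 [e2 ge]] := gamma_uniform_std (leq_pmulr 2 (ltnW N2)).
have [-> ->] := gamma_uniform_std_mul (leqnn 2) (ltnW N2) gc ge.
rewrite mulnC in ge; have [<- <-] := gamma_uniform_std_mul N2 (isT : (0 < 2)%N) gd ge.
exact: gd.
Qed.

Lemma gamma_std_form : exists c1 c2, forall n, (2 <= n)%N -> forall p : 'rV[R]_n, posprob p ->
  gamma n p =2 std_form c1 c2 p.
Proof.
have [c1 [c2 gc]] := gamma_uniform_std_const.
exists c1, c2 => n n2 p pP.
apply: bilinear_form_eq_delta => [||i j]; [exact: gamma_bilinear | exact: std_form_bilinear |].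
pose h := (fun q => gram (gamma n q) i j) -
  (fun q : 'rV[R]_n => std_form c1 c2 q (delta_mx ord0 i) (delta_mx ord0 j)).
suff : h p = 0 by rewrite /h fctE mxE => /eqP; rewrite subr_eq0 => /eqP.
apply: (@continuous_within_dense_eq0 R _ [set q | posprob q] h _ _ p pP) => [|q e qP e_gt0].
  apply/subspace_continuousP => q qP; apply: cvgB.
    apply: (@continuous_cvg _ _ _ _ _ (fun q => gram (gamma n q)) (fun M => M i j)).
      exact: coord_continuous.
    exact: (subspace_continuousP _ _).1 (gamma_continuous n2) q qP.
  apply: cvg_within_filter; exact: continuous_std_form_delta.
have [k [k_gt0 close]] := rational_approx qP e_gt0.
have N2 := leq_trans n2 (leq_sum_block k_gt0).
exists (\row_x ((k x)%:R / (\sum_x k x)%:R)); split.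
- rewrite -pushf_block_uniform; apply: posprob_pushf; first exact: block_surjective.
  exact/posprob_uniform/ltnW.
- by apply: row_ball => // x; rewrite mxE.
- by rewrite /h fctE mxE (gamma_block_std n2 k_gt0 (gc _ N2)) subrr.
Qed.

End PushforwardInvariance.

Theorem mainTheorem10 (R : realType)
    (gamma : forall n : nat, 'rV[R]_n -> 'rV[R]_n -> 'rV[R]_n -> R) :
  (forall n : nat, (2 <= n)%N -> forall p : 'rV[R]_n, posprob p ->
     bilinear_form (gamma n p)) ->
  (forall n : nat, (2 <= n)%N ->
     {within [set p : 'rV[R]_n | posprob p], continuous (fun p => gram (gamma n p))}) ->
  ((exists c1 c2 : R, forall n : nat, (2 <= n)%N ->
      forall p : 'rV[R]_n, posprob p -> forall A B : 'rV[R]_n,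
        gamma n p A B = c1 * pinner p A B + c2 * (expect p A * expect p B))
   <->
   (forall m n : nat, (2 <= m)%N -> (m <= n)%N ->
      forall F : 'I_n -> 'I_m, (forall x : 'I_m, exists y : 'I_n, F y = x) ->
      forall p : 'rV[R]_n, posprob p -> forall A B : 'rV[R]_m,
        gamma m (pushf F p) A B = gamma n p (compF A F) (compF B F))).
Proof.
move=> gamma_bilinear gamma_continuous; split.
  move=> [c1 [c2 gc]] m n m2 mn F F_surj p pP A B.
  rewrite gc //; last exact: posprob_pushf.
  by rewrite gc ?(leq_trans m2 mn) // pinner_pushf !expect_pushf.
move=> gamma_pushf; have [c1 [c2 gc]] := gamma_std_form gamma_bilinear gamma_pushf gamma_continuous.
by exists c1, c2.
Qed.
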